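(* Let $a,k,d,e$ be integers with $0\le a\le k$, $1\le d\le k$, and $e=d$ or $2e=d$. Then for all integers $m,n\ge0$, $${}_d\overline{b}_{dk+e,\,da+d}(m,n)-{}_d\overline{b}_{dk+e,\,da}(m,n)={}_db_{dk+e,\,dk-da+e}(m-da,\,n-m).$$
   Context: Partitions are finite non-increasing sequences of positive integers; $\phi_i$ is the number of occurrences of $i$ as a part. For an integer $N$ and integers $m,n$, ${}_db_{dk+e,N}(m,n)$ is the number of partitions of $n$ into exactly $m$ parts with $\phi_i+\phi_{i+1}<dk+e$ for all $i\ge1$, $\phi_1<N$, and $d\mid\phi_{2i}$ for all $i\ge1$; ${}_d\overline{b}_{dk+e,N}(m,n)$ is the number of partitions of $n$ into exactly $m$ parts with $\phi_i+\phi_{i+1}<dk+e$ for all $i\ge1$, $\phi_1<N$, and $d\mid\phi_{2i+1}$ for all $i\ge0$. Both counts are $0$ when $m<0$ or $n<0$. *)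

From HB Require Import structures.
From mathcomp Require Import all_boot all_order all_algebra.
Set Implicit Arguments. Unset Strict Implicit. Unset Printing Implicit Defensive.

(* A partition of n is encoded by its multiplicity vector
   f : {ffun 'I_n -> 'I_n.+1}, where f j is the multiplicity phi_(j+1)
   of the part j+1 (every part is <= n and every multiplicity is <= n,
   so this encoding is a bijection onto the partitions of n). *)
Definition mult (n : nat) (f : {ffun 'I_n -> 'I_n.+1}) (i : nat) : nat :=
  if i is i'.+1 then
    (if insub i' is Some j then nat_of_ord (f j) else 0)
  else 0.

(* The conditions shared by both families: f is a partition of n into
   exactly m parts, phi_i + phi_(i+1) < K for all i >= 1, phi_1 < N.
   (For i > n+1 both multiplicities vanish, so checking i <= n+1 suffices
   -- together with K > 0 encoded by i = n+1.) *)
Definition base_cond (K N m n : nat) (f : {ffun 'I_n -> 'I_n.+1}) : bool :=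
  [&& \sum_(1 <= i < n.+1) i * mult f i == n,
      \sum_(1 <= i < n.+1) mult f i == m,
      [forall i : 'I_n.+2, (1 <= i) ==> (mult f i + mult f i.+1 < K)]
    & mult f 1 < N].

Definition even_div (d n : nat) (f : {ffun 'I_n -> 'I_n.+1}) : bool :=
  [forall i : 'I_n.+1, (1 <= i) ==> (d %| mult f (2 * i))].

Definition odd_div (d n : nat) (f : {ffun 'I_n -> 'I_n.+1}) : bool :=
  [forall i : 'I_n.+1, d %| mult f (2 * i).+1].

(* {}_d b_{K,N}(m,n), with m n integers; 0 if m < 0 or n < 0 *)
Definition b_count (d K N : nat) (m n : int) : nat :=
  match m, n with
  | Posz m', Posz n' =>
      #|[pred f : {ffun 'I_n' -> 'I_n'.+1} | base_cond K N m' f && even_div d f]|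
  | _, _ => 0
  end.

Definition bbar_count (d K N : nat) (m n : int) : nat :=
  match m, n with
  | Posz m', Posz n' =>
      #|[pred f : {ffun 'I_n' -> 'I_n'.+1} | base_cond K N m' f && odd_div d f]|
  | _, _ => 0
  end.

From HB Require Import structures.
From mathcomp Require Import all_boot all_order all_algebra.
From mathcomp Require Import zify.
Import GRing.Theory Num.Theory.
Set Implicit Arguments. Unset Strict Implicit. Unset Printing Implicit Defensive.

(* Write da = d * a and K = d * k + e.  A partition counted by
   bbar_{K, da + d} but not by bbar_{K, da} satisfies da <= phi_1 < da + d
   and d | phi_1, hence phi_1 = da.  Removing these da ones and lowering
   every other part by one (phi'_j = phi_(j+1)) yields a partition of n - m
   into m - da parts: the difference condition at i = 1 becomes
   phi'_1 < K - da, the ones at i >= 2 become phi'_j + phi'_(j+1) < K, and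
   d | phi_(2i+1) (i >= 1) becomes d | phi'_(2i).  This is a bijection onto
   the partitions counted by b_{K, K - da}(m - da, n - m); when m < da or
   n < m both sides are 0. *)

Arguments mult : simpl never.

Section Multiplicities.

Variable n : nat.
Implicit Types (f g : {ffun 'I_n -> 'I_n.+1}) (F : nat -> nat).

Lemma multE f (j : 'I_n) : mult f j.+1 = f j.
Proof.
rewrite /mult; case: insubP => [j' _ j'E | j_ge]; last by rewrite ltn_ord in j_ge.
by congr (nat_of_ord (f _)); apply: val_inj.
Qed.

Lemma mult_out f i : n < i -> mult f i = 0.
Proof.
case: i => // i lt_ni; rewrite /mult; case: insubP => // j _ jE.
by move: (ltn_ord j); rewrite jE ltnNge -ltnS lt_ni.
Qed.

Lemma mult_inj f g : (forall i, 0 < i -> mult f i = mult g i) -> f = g.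
Proof. by move=> fg; apply/ffunP => j; apply: val_inj; rewrite /= -!multE fg. Qed.

Definition encode F : {ffun 'I_n -> 'I_n.+1} := [ffun j : 'I_n => inord (F j.+1)].

Lemma mult_encode F :
  (forall i, 0 < i <= n -> F i <= n) -> (forall i, n < i -> F i = 0) ->
  forall i, 0 < i -> mult (encode F) i = F i.
Proof.
move=> F_le F_out [|i] // _; case: (ltnP i n) => [lt_in | le_ni].
  by rewrite (multE _ (Ordinal lt_in)) ffunE inordK // ltnS F_le.
by rewrite mult_out ?F_out.
Qed.

End Multiplicities.

Lemma forall_ordP B (P : nat -> bool) :
  (forall i, B <= i -> P i) -> reflect (forall i, P i) [forall i : 'I_B, P i].
Proof.
move=> P_out; apply: (iffP forallP) => [P_in i | P_all i //].
by case: (ltnP i B) => [lt_iB | le_Bi]; [exact: (P_in (Ordinal lt_iB)) | exact: P_out].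
Qed.

Definition part_cond (K N m n : nat) (F : nat -> nat) : Prop :=
  [/\ \sum_(1 <= i < n.+1) i * F i = n, \sum_(1 <= i < n.+1) F i = m,
      (forall i, 0 < i -> F i + F i.+1 < K) & F 1 < N].

Definition odd_mults (d : nat) (F : nat -> nat) : Prop :=
  forall i, d %| F (2 * i).+1.

Definition even_mults (d : nat) (F : nat -> nat) : Prop :=
  forall i, 0 < i -> d %| F (2 * i).

Section Reflection.

Variables n d : nat.
Implicit Type f : {ffun 'I_n -> 'I_n.+1}.

(* The boolean conditions say the same as their sequence versions;
   K > 0 is needed because base_cond also tests pairs of vanishing
   multiplicities. *)
Lemma base_condP K N m f :
  0 < K -> reflect (part_cond K N m n (mult f)) (base_cond K N m f).
Proof.
move=> K_gt0.
have pair_out i : n.+2 <= i -> (1 <= i) ==> (mult f i + mult f i.+1 < K).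
  by move=> le_i; rewrite !mult_out ?implybT //; lia.
apply: (iffP and4P) => [[/eqP wsum /eqP sum /(forall_ordP pair_out) pairs first]
                       |[wsum sum pairs first]].
  by split=> // i i_gt0; move/implyP: (pairs i); apply.
split=> //; [exact/eqP | exact/eqP |].
by apply/(forall_ordP pair_out) => i; apply/implyP; apply: pairs.
Qed.

Lemma odd_divP f : reflect (odd_mults d (mult f)) (odd_div d f).
Proof. by apply: forall_ordP => i lt_i; rewrite mult_out ?dvdn0 //; lia. Qed.

Lemma even_divP f : reflect (even_mults d (mult f)) (even_div d f).
Proof.
have even_out i : n.+1 <= i -> (1 <= i) ==> (d %| mult f (2 * i)).
  by move=> le_i; rewrite mult_out ?dvdn0 ?implybT //; lia.
apply: (iffP (forall_ordP even_out)) => even_all i.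
  by move=> i_gt0; move/implyP: (even_all i); apply.
by apply/implyP; apply: even_all.
Qed.

End Reflection.

Lemma sum_vanish (F : nat -> nat) S T : 1 <= S <= T ->
  (forall i, S <= i -> F i = 0) ->
  \sum_(1 <= i < T) F i = \sum_(1 <= i < S) F i.
Proof.
move=> /andP[le_1S le_ST] F_out; rewrite (big_cat_nat le_1S le_ST) /= -[RHS]addn0.
by congr (_ + _); rewrite big_nat_cond big1 // => i /andP[/andP[le_Si _] _]; apply: F_out.
Qed.

Lemma term_le_sum (F : nat -> nat) S i : 0 < i ->
  (forall j, S <= j -> F j = 0) -> F i <= \sum_(1 <= j < S) F j.
Proof.
move=> i_gt0 F_out; case: (ltnP i S) => [lt_iS | le_Si]; last by rewrite F_out.
rewrite (@big_cat_nat _ _ _ i) //=; last exact: ltnW.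
by rewrite [X in _ + X]big_ltn // addnCA leq_addr.
Qed.

Lemma part_bounds K N m n (F : nat -> nat) :
  (forall i, n < i -> F i = 0) -> part_cond K N m n F ->
  forall i, 0 < i -> i * F i <= n /\ F i <= m.
Proof.
move=> F_out [wsum sum _ _] i i_gt0; rewrite -[X in _ <= X]wsum -[X in _ /\ _ <= X]sum.
by split; apply: term_le_sum => // j lt_j; rewrite F_out ?muln0.
Qed.

(* G is the sequence obtained from F by removing da parts equal to 1 and
   lowering the other parts by one. *)
Definition shifted (da : nat) (F G : nat -> nat) : Prop :=
  F 1 = da /\ forall j, 0 < j -> F j.+1 = G j.

Section Shift.

Variables (da : nat) (F G : nat -> nat).
Hypothesis FG : shifted da F G.

Lemma sum_shifted B : 0 < B ->
  \sum_(1 <= i < B.+1) F i = da + \sum_(1 <= j < B) G j /\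
  \sum_(1 <= i < B.+1) i * F i =
    da + \sum_(1 <= j < B) j * G j + \sum_(1 <= j < B) G j.
Proof.
case: FG => F1 FG_succ B_gt0.
have lt_1B : 1 < B.+1 by [].
rewrite (big_ltn lt_1B) [\sum_(1 <= i < B.+1) _](big_ltn lt_1B).
rewrite !big_add1 /= F1 mul1n -addnA -big_split /=.
split; congr (_ + _); apply: eq_big_nat => j /andP[j_gt0 _].
  by rewrite FG_succ.
by rewrite FG_succ // mulSn addnC.
Qed.

Lemma shifted_sums n n' : n' <= n ->
  (forall i, n < i -> F i = 0) -> (forall j, n' < j -> G j = 0) ->
  \sum_(1 <= i < n.+1) F i = da + \sum_(1 <= j < n'.+1) G j /\
  \sum_(1 <= i < n.+1) i * F i =
    da + \sum_(1 <= j < n'.+1) j * G j + \sum_(1 <= j < n'.+1) G j.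
Proof.
move=> le_n'n F_out G_out.
have vanishF (P : nat -> nat) : (forall i, n < i -> P i = 0) ->
    \sum_(1 <= i < n.+2) P i = \sum_(1 <= i < n.+1) P i.
  by move=> P_out; apply: sum_vanish => //; rewrite leqnSn.
have vanishG (P : nat -> nat) : (forall j, n' < j -> P j = 0) ->
    \sum_(1 <= j < n.+1) P j = \sum_(1 <= j < n'.+1) P j.
  by move=> P_out; apply: sum_vanish => //; rewrite ltnS le_n'n.
have [sumF wsumF] := sum_shifted (ltn0Sn n).
have iF_out i : n < i -> i * F i = 0 by move/F_out ->; rewrite muln0.
have jG_out j : n' < j -> j * G j = 0 by move/G_out ->; rewrite muln0.
rewrite (vanishF _ F_out) (vanishG _ G_out) in sumF.
by rewrite (vanishF _ iF_out) (vanishG _ jG_out) (vanishG _ G_out) in wsumF.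
Qed.

(* If F is a partition of n into m parts, G has total size n - m, hence
   j * G j <= n - m for every part size j. *)
Lemma shifted_weight_bound K N m n : part_cond K N m n F ->
  (forall i, n < i -> F i = 0) -> forall j, 0 < j -> j * G j <= n - m.
Proof.
case: FG => _ FG_succ partF F_out.
have G_out j : n < j -> G j = 0.
  by move=> lt_nj; rewrite -FG_succ ?F_out ?(leq_ltn_trans (leq0n n)) // ltnS ltnW.
have [sumF wsumF] := shifted_sums (leqnn n) F_out G_out.
have wsumG : \sum_(1 <= j < n.+1) j * G j = n - m by case: partF; lia.
move=> j j_gt0; rewrite -wsumG; apply: term_le_sum => // i /G_out ->; exact: muln0.
Qed.

End Shift.

Lemma shifted_inj da F F' G : shifted da F G -> shifted da F' G ->
  forall i, 0 < i -> F i = F' i.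
Proof.
by move=> [F1 FG] [F'1 F'G] [|[|i]] // _; rewrite ?F1 ?F'1 // FG ?F'G.
Qed.

Lemma shifted_fun da F G G' : shifted da F G -> shifted da F G' ->
  forall j, 0 < j -> G j = G' j.
Proof. by move=> [_ FG] [_ FG'] j j_gt0; rewrite -FG ?FG'. Qed.

Lemma transfer K d da m n (F G : nat -> nat) :
  shifted da F G -> (forall i, n < i -> F i = 0) -> (forall j, n - m < j -> G j = 0) ->
  da <= m <= n -> da < K -> d %| da -> 0 < d ->
  part_cond K (da + d) m n F /\ odd_mults d F <->
  part_cond K (K - da) (m - da) (n - m) G /\ even_mults d G.
Proof.
move=> FG F_out G_out /andP[le_dam le_mn] lt_daK d_da d_gt0.
have [F1 FG_succ] := FG.
have [sumF wsumF] := shifted_sums FG (leq_subr m n) F_out G_out.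
split=> [[[wsum sum pairs first] odds] | [[wsum sum pairs first] evens]].
- split; first split.
  + lia.
  + lia.
  + by move=> j j_gt0; rewrite -!FG_succ //; apply: pairs.
  + by move: (pairs 1 isT); rewrite F1 FG_succ //; lia.
  + by move=> i i_gt0; rewrite -FG_succ ?muln_gt0 //; apply: odds.
- split; first split.
  + lia.
  + lia.
  + move=> [|[|i]] // _; first by rewrite F1 FG_succ //; lia.
    by rewrite !FG_succ //; apply: pairs.
  + by rewrite F1 -addn1 leq_add2l.
  + by move=> [|i]; [rewrite muln0 F1 | rewrite FG_succ ?muln_gt0 //; apply: evens].
Qed.

Lemma dvdn_window d x y : d %| x -> d %| y -> y <= x < y + d -> x = y.
Proof.
move=> /dvdnP[p ->] /dvdnP[q ->] /andP[le_qp lt_pq].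
have d_gt0 : 0 < d by lia.
rewrite addnC -mulSn ltn_pmul2r // in lt_pq; rewrite leq_pmul2r // in le_qp.
by congr (_ * _); lia.
Qed.

(* The partitions counted by bbar_{K, da + d}(m, n) but not by bbar_{K, da}(m, n). *)
Definition top_set (K d da m n : nat) : pred {ffun 'I_n -> 'I_n.+1} :=
  [pred f | [&& base_cond K (da + d) m f, odd_div d f & da <= mult f 1]].

Definition bottom_set (K d da m n : nat) : pred {ffun 'I_n -> 'I_n.+1} :=
  [pred g | base_cond K (K - da) (m - da) g && even_div d g].

(* Remove the parts equal to 1 and lower all other parts by one. *)
Definition down (n' n : nat) (f : {ffun 'I_n -> 'I_n.+1}) : {ffun 'I_n' -> 'I_n'.+1} :=
  encode n' (fun j => mult f j.+1).

(* Raise all parts by one and add da parts equal to 1. *)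
Definition up (n da n' : nat) (g : {ffun 'I_n' -> 'I_n'.+1}) : {ffun 'I_n -> 'I_n.+1} :=
  encode n (fun i => if i == 1 then da else mult g i.-1).

Arguments top_set : clear implicits.
Arguments bottom_set : clear implicits.
Arguments down n' {n} f.
Arguments up n da {n'} g.

Section Bijection.

Variables K d da m n : nat.
Hypotheses (le_dam : da <= m) (le_mn : m <= n) (lt_daK : da < K).
Hypotheses (d_da : d %| da) (d_gt0 : 0 < d).

Let K_gt0 : 0 < K := leq_ltn_trans (leq0n da) lt_daK.
Let range : da <= m <= n := introT andP (conj le_dam le_mn).

(* In the top set d | phi_1 and da <= phi_1 < da + d force phi_1 = da. *)
Lemma top_first f : f \in top_set K d da m n -> mult f 1 = da.
Proof.
rewrite inE => /and3P[/(base_condP _ _ _ K_gt0) [_ _ _ lt_f1] /odd_divP odds le_f1].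
by apply: dvdn_window (odds 0) d_da _; rewrite le_f1.
Qed.

Lemma down_shifted f : f \in top_set K d da m n ->
  down (n - m) f \in bottom_set K d da m (n - m) /\
  shifted da (mult f) (mult (down (n - m) f)).
Proof.
move=> top_f; have F1 := top_first top_f.
move: top_f; rewrite inE => /and3P[/(base_condP _ _ _ K_gt0) partF /odd_divP oddF _].
have F_out i : n < i -> mult f i = 0 by apply: mult_out.
have wbound := shifted_weight_bound (conj F1 (fun j _ => erefl)) partF F_out.
have downE : forall j, 0 < j -> mult (down (n - m) f) j = mult f j.+1.
  by apply: mult_encode => [j /andP[j_gt0 _] | j lt_j]; move: (wbound j); nia.
have FG : shifted da (mult f) (mult (down (n - m) f)) by split=> // j /downE.
split=> //; rewrite inE.
have G_out j : n - m < j -> mult (down (n - m) f) j = 0 by apply: mult_out.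
have [partG evenG] := (transfer FG F_out G_out range lt_daK d_da d_gt0).1 (conj partF oddF).
by apply/andP; split; [apply/(base_condP _ _ _ K_gt0) | apply/even_divP].
Qed.

Lemma up_shifted g : g \in bottom_set K d da m (n - m) ->
  up n da g \in top_set K d da m n /\ shifted da (mult (up n da g)) (mult g).
Proof.
rewrite inE => /andP[/(base_condP _ _ _ K_gt0) partG /even_divP evenG].
have G_out j : n - m < j -> mult g j = 0 by apply: mult_out.
have bounds := part_bounds G_out partG.
have upE : forall i, 0 < i -> mult (up n da g) i = if i == 1 then da else mult g i.-1.
  apply: mult_encode => [[|[|i]] // /andP[_ le_in] | [|[|i]] // lt_ni] /=.
  - lia.
  - by have [_] := bounds i.+1 isT; lia.
  - lia.
  - by have [] := bounds i.+1 isT; case: (posnP (mult g i.+1)) => //; nia.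
have FG : shifted da (mult (up n da g)) (mult g).
  by split=> [|[|j] //]; rewrite upE.
split=> //; rewrite inE.
have F_out i : n < i -> mult (up n da g) i = 0 by apply: mult_out.
have [partF oddF] := (transfer FG F_out G_out range lt_daK d_da d_gt0).2 (conj partG evenG).
apply/and3P; split; [exact/(base_condP _ _ _ K_gt0) | exact/odd_divP | by case: FG => ->].
Qed.

(* [down] and [up] are mutually inverse between the two sets. *)
Lemma card_top_bottom : #|top_set K d da m n| = #|bottom_set K d da m (n - m)|.
Proof.
have downK : {in top_set K d da m n, cancel (down (n - m)) (up n da)}.
  move=> f top_f; have [/up_shifted[_ FG'] FG] := down_shifted top_f.
  by apply: mult_inj; apply: shifted_inj FG' FG.
rewrite -(card_in_image (can_in_inj downK)); apply: eq_card => g.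
apply/imageP/idP => [[f /down_shifted[bot_g _] ->] // | bot_g].
have [top_up FG] := up_shifted bot_g; exists (up n da g) => //.
by apply: mult_inj; apply: shifted_fun FG (down_shifted top_up).2.
Qed.

End Bijection.

Lemma top_range K d da m n f : 0 < K -> f \in top_set K d da m n -> da <= m <= n.
Proof.
move=> K_gt0; rewrite inE => /and3P[/(base_condP _ _ _ K_gt0) [wsum sum _ _] _ le_da1].
have F_out i : n.+1 <= i -> mult f i = 0 by apply: mult_out.
apply/andP; split.
  by rewrite -sum (leq_trans le_da1) // term_le_sum.
rewrite -[m]sum -[X in _ <= X]wsum big_nat [X in _ <= X]big_nat.
by apply: leq_sum => i /andP[i_gt0 _]; apply: leq_pmull.
Qed.

(* Since bbar_{K, da}(m, n) counts a subset of the partitions counted by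
   bbar_{K, da + d}(m, n), the difference is the size of the top set. *)
Lemma card_bbar_split K d da m n :
  #|[pred f : {ffun 'I_n -> 'I_n.+1} | base_cond K (da + d) m f && odd_div d f]| =
  #|[pred f : {ffun 'I_n -> 'I_n.+1} | base_cond K da m f && odd_div d f]| +
  #|top_set K d da m n|.
Proof.
rewrite -(cardID [pred f : {ffun 'I_n -> 'I_n.+1} | mult f 1 < da]).
congr (_ + _); apply: eq_card => f; rewrite !inE /base_cond;
  case: (ltnP (mult f 1) da) => [lt_f1 | le_f1].
- by rewrite (ltn_addr d lt_f1) !andbT.
- by rewrite !andbF.
- by rewrite !andbF.
- by rewrite !andbT.
Qed.

Lemma b_count_neg d K N (m n : int) : ((m < 0) || (n < 0))%R -> b_count d K N m n = 0.
Proof. by case: m n => [m|m] [n|n]. Qed.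

Unset Implicit Arguments.

Theorem mainTheorem5 (a k d e : nat) (m n : nat) :
  a <= k -> 1 <= d <= k -> (e = d \/ 2 * e = d) ->
  (Posz (bbar_count d (d * k + e) (d * a + d) (Posz m) (Posz n))
     - Posz (bbar_count d (d * k + e) (d * a) (Posz m) (Posz n)))%R
  = Posz (b_count d (d * k + e) (d * k - d * a + e)
       (Posz m - Posz (d * a))%R (Posz n - Posz m)%R).
Proof.
move=> le_ak /andP[d_gt0 _] e_cases.
have e_gt0 : 0 < e by case: e_cases; lia.
have le_da_dk : d * a <= d * k by rewrite leq_mul2l le_ak orbT.
have lt_daK : d * a < d * k + e by lia.
have d_da : d %| d * a by apply: dvdn_mulr.
have -> : d * k - d * a + e = d * k + e - d * a by lia.
rewrite /bbar_count card_bbar_split PoszD addrAC subrr add0r.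
case: (boolP (d * a <= m <= n)) => [/andP[le_dam le_mn] | out_of_range].
  by rewrite !subzn // card_top_bottom.
have -> : #|top_set (d * k + e) d (d * a) m n| = 0.
  apply: eq_card0 => f; apply/negP => /(top_range (leq_ltn_trans (leq0n _) lt_daK)).
  exact/negP.
rewrite b_count_neg // !subr_lt0 !ltz_nat.
by move: out_of_range; rewrite negb_and -!ltnNge.
Qed.
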